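(* Let $\mathcal{G}=(\mathcal{V},\mathcal{E})$ and $\mathcal{G}'=(\mathcal{V}',\mathcal{E}')$ be finite graphs with no isolated vertices such that $\min\{|\mathcal{V}|,|\mathcal{V}'|\}\ge4$. Then $\mathcal{G}$ is contained in $\mathcal{G}'$ if and only if $D(\mathcal{G})\le D(\mathcal{G}')$.
   Context: $\mathcal{G}$ is contained in $\mathcal{G}'$ if $\mathcal{G}$ is isomorphic to a subgraph of $\mathcal{G}'$ (a subgraph $(\mathcal{V}_0,\mathcal{E}_0)$ having $\mathcal{V}_0\subseteq\mathcal{V}'$, $\mathcal{E}_0\subseteq\mathcal{E}'$). An abstract storage device (ASD) is a pair $D=(\mathcal{S}_D,\mathcal{P}_D)$, $\mathcal{S}_D$ a finite set and $\mathcal{P}_D$ a finite family of partitions of $\mathcal{S}_D$. For a partition $\pi$ of $\mathcal{S}'$ and $\phi:\mathcal{S}\to\mathcal{S}'$, $\pi\circ\phi$ is the partition of $\mathcal{S}$ with $x,y$ in the same block iff $\phi(x),\phi(y)$ are in the same block of $\pi$; $\pi\preceq\rho$ means every block of $\pi$ lies in a block of $\rho$. $D\le D'$ means there exist $\phi:\mathcal{S}_D\to\mathcal{S}_{D'}$, $\alpha:\mathcal{P}_D\to\mathcal{P}_{D'}$ with $\alpha(\pi)\circ\phi\preceq\pi$ for all $\pi\in\mathcal{P}_D$. The graph device $D(\mathcal{G})$ has state space $\mathcal{V}$ and partition set $\{\pi_e:e\in\mathcal{E}\}$, where for $e=\{u,v\}$, $\pi_e=\{\{u\},\{v\},\mathcal{V}\setminus\{u,v\}\}$.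 *)

From mathcomp Require Import all_boot.
Set Implicit Arguments. Unset Strict Implicit. Unset Printing Implicit Defensive.

Definition simple_graph (V : finType) (e : rel V) : Prop :=
  symmetric e /\ irreflexive e.

Definition no_isolated (V : finType) (e : rel V) : Prop :=
  forall v : V, exists u : V, e v u.

Definition contained (V V' : finType) (e : rel V) (e' : rel V') : Prop :=
  exists f : V -> V', injective f /\ forall u v, e u v -> e' (f u) (f v).

(* Abstract storage device: finite state set S and a finite family P of
   partitions of S (a partition being a set of blocks). *)
Record ASD := MkASD {
  asd_S : finType;
  asd_P : {set {set {set asd_S}}}
}.

Definition pcomp (S S' : finType) (pi : {set {set S'}}) (phi : S -> S')
  : {set {set S}} :=
  [set [set x | phi x \in B] | B : {set S'} in pi] :\ set0.

Definition prefine (S : finType) (pi rho : {set {set S}}) : Prop :=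
  forall B, B \in pi -> exists2 C, C \in rho & B \subset C.

Definition asd_le (D D' : ASD) : Prop :=
  exists (phi : asd_S D -> asd_S D')
         (alpha : {set {set asd_S D}} -> {set {set asd_S D'}}),
    forall pi, pi \in asd_P D ->
      alpha pi \in asd_P D' /\ prefine (pcomp (alpha pi) phi) pi.

Definition pi_edge (V : finType) (u v : V) : {set {set V}} :=
  [set [set u]; [set v]; ~: [set u; v]] :\ set0.

Definition graph_device (V : finType) (e : rel V) : ASD :=
  @MkASD V [set pi_edge u v | u in V, v in V & e u v].

From Pilot Require Import Defs.
From mathcomp Require Import all_boot.
Set Implicit Arguments. Unset Strict Implicit. Unset Printing Implicit Defensive.

(* An embedding f of G into G' gives the device map (f, pi_{u,v} |-> pi_{f u, f v}),
   and by injectivity pi_{f u, f v} o f is exactly pi_{u,v}.  Conversely, if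
   pi_{a,b} o phi refines pi_{u,v}, the fibre of the block of phi u is {u}.
   Were phi u outside {a,b}, all other vertices would map into {a,b}, impossible
   for an injective phi once |V| >= 4; so phi maps u and v onto the edge {a,b}.
   Injectivity of phi itself comes from the same fibre fact, applied to an edge at
   each vertex (no vertex is isolated). *)

Section EdgePartition.
Variable V : finType.
Implicit Types (u v w : V) (B : {set V}).

Lemma in_pi_edge u v B :
  (B \in pi_edge u v) =
  (B != set0) && [|| B == [set u], B == [set v] | B == ~: [set u; v]].
Proof. by rewrite /pi_edge in_setD1 !inE -orbA. Qed.

Lemma pi_edgeC u v : pi_edge u v = pi_edge v u.
Proof. by apply/setP => B; rewrite !in_pi_edge [[set v; u]]setUC orbCA. Qed.

Lemma pi_edge_cover u v w : exists2 B, B \in pi_edge u v & w \in B.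
Proof.
have block_in x B : x \in B -> [|| B == [set u], B == [set v] | B == ~: [set u; v]] ->
    exists2 B', B' \in pi_edge u v & x \in B'.
  move=> xB hB; exists B => //; rewrite in_pi_edge hB andbT.
  by apply/set0Pn; exists x.
have [-> | nu] := eqVneq w u; first by apply: (block_in _ [set u]); rewrite ?inE ?eqxx.
have [-> | nv] := eqVneq w v; first by apply: (block_in _ [set v]); rewrite ?inE ?eqxx ?orbT.
by apply: (block_in _ (~: [set u; v])); rewrite ?eqxx ?orbT // !inE negb_or nu nv.
Qed.

Lemma pi_edge_block_endpoint u v B : B \in pi_edge u v -> u \in B -> B = [set u].
Proof.
rewrite in_pi_edge => /andP[_ /or3P[] /eqP -> //].
- by rewrite inE => /eqP ->.
- by rewrite !inE eqxx.
Qed.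

End EdgePartition.

Section Refinement.
Variables (S S' : finType) (phi : S -> S').

Lemma fiber_in_pcomp (P : {set {set S'}}) C x :
  C \in P -> phi x \in C -> [set y | phi y \in C] \in Defs.pcomp P phi.
Proof.
move=> hC hx; rewrite /Defs.pcomp in_setD1 andbC.
rewrite (imset_f (fun B : {set S'} => [set y | phi y \in B]) hC) /=.
by apply/set0Pn; exists x; rewrite inE.
Qed.

Lemma prefine_pi_edge_fiber (P : {set {set S'}}) (u v t : S) C :
  prefine (Defs.pcomp P phi) (pi_edge u v) -> C \in P -> phi u \in C -> phi t \in C -> t = u.
Proof.
move=> href hC hu ht.
have [D hD fiber_sub] := href _ (fiber_in_pcomp hC hu).
have uD : u \in D by apply: (subsetP fiber_sub); rewrite inE.
have tD : t \in D by apply: (subsetP fiber_sub); rewrite inE.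
by move: tD; rewrite (pi_edge_block_endpoint hD uD) inE => /eqP.
Qed.

Lemma prefine_pi_edge_endpoint (a b : S') (u v : S) :
  3 < #|S| -> injective phi ->
  prefine (Defs.pcomp (pi_edge a b) phi) (pi_edge u v) -> phi u \in [set a; b].
Proof.
move=> hS inj href; apply/negPn/negP => u_out.
have hC : ~: [set a; b] \in pi_edge a b.
  by rewrite in_pi_edge eqxx !orbT andbT; apply/set0Pn; exists (phi u); rewrite inE.
have rest_in : phi @: [set~ u] \subset [set a; b].
  apply/subsetP => _ /imsetP[t tu ->]; apply: contraLR tu => t_out.
  rewrite !inE negbK; apply/eqP/(prefine_pi_edge_fiber href hC); by rewrite in_setC.
move: (subset_leq_card rest_in); rewrite card_imset // cardsC1 cards2.
by case: #|S| hS => [|[|[|[|n]]]] //; case: (a != b).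
Qed.

End Refinement.

Lemma pi_edge_in_graph_device (V : finType) (e : rel V) u v :
  e u v -> pi_edge u v \in asd_P (graph_device e).
Proof. by move=> huv; apply/imset2P; exists u v; rewrite ?inE. Qed.

Lemma pcomp_pi_edge_inj (S S' : finType) (f : S -> S') (u v : S) :
  injective f -> Defs.pcomp (pi_edge (f u) (f v)) f = pi_edge u v.
Proof.
move=> inj.
have preim1 w : [set x | f x \in [set f w]] = [set w].
  by apply/setP => x; rewrite !inE (inj_eq inj).
have preimC : [set x | f x \in ~: [set f u; f v]] = ~: [set u; v].
  by apply/setP => x; rewrite !inE !(inj_eq inj).
apply/setP => B; rewrite /Defs.pcomp in_setD1 in_pi_edge; have [//|nzB /=] := eqVneq B set0.
apply/imsetP/idP => [[C] | hB].
  by rewrite in_pi_edge => /andP[_ /or3P[] /eqP -> ->]; rewrite ?preim1 ?preimC eqxx ?orbT.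
have nz_block (C : {set S'}) : [set x | f x \in C] = B -> C != set0.
  by move=> hC; apply: contraNneq nzB => C0; rewrite -hC C0; apply/eqP/setP => x; rewrite !inE.
case/or3P: hB => /eqP defB;
  [exists [set f u] | exists [set f v] | exists (~: [set f u; f v])];
  rewrite ?preim1 ?preimC ?defB // in_pi_edge eqxx ?orbT andbT;
  by apply: nz_block; rewrite ?preim1 ?preimC defB.
Qed.

Lemma contained_asd_le (V V' : finType) (e : rel V) (e' : rel V') :
  contained e e' -> asd_le (graph_device e) (graph_device e').
Proof.
move=> [f [inj hf]]; exists f.
exists (fun pi => if [pick p : V * V | e p.1 p.2 && (pi == pi_edge p.1 p.2)] is Some p
                  then pi_edge (f p.1) (f p.2) else set0).
move=> pi /imset2P[u0 v0 _]; rewrite inE => /andP[_ huv0] ->.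
case: pickP => [[u v] /= /andP[huv /eqP ->] | no_edge]; last first.
  by have := no_edge (u0, v0); rewrite /= huv0 eqxx.
split; first exact/pi_edge_in_graph_device/hf.
by rewrite pcomp_pi_edge_inj // => B hB; exists B.
Qed.

Section DeviceMorphism.
Variables (V V' : finType) (e : rel V) (e' : rel V').
Variables (phi : V -> V') (alpha : {set {set V}} -> {set {set V'}}).
Hypothesis halpha : forall pi, pi \in asd_P (graph_device e) ->
  alpha pi \in asd_P (graph_device e') /\ prefine (Defs.pcomp (alpha pi) phi) pi.

Lemma edge_refined_by_edge u v : e u v ->
  exists a b, e' a b /\ prefine (Defs.pcomp (pi_edge a b) phi) (pi_edge u v).
Proof.
move=> /pi_edge_in_graph_device /halpha[/imset2P[a b _]].
by rewrite inE => hab -> href; exists a, b.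
Qed.

Lemma device_morphism_inj : no_isolated e -> injective phi.
Proof.
move=> ni y y' phi_yy'; have [z /edge_refined_by_edge [a [b [_ href]]]] := ni y.
have [C hC yC] := pi_edge_cover a b (phi y).
by symmetry; apply: (prefine_pi_edge_fiber href hC yC); rewrite -phi_yy'.
Qed.

Lemma device_morphism_edge u v :
  3 < #|V| -> no_isolated e -> irreflexive e -> symmetric e' ->
  e u v -> e' (phi u) (phi v).
Proof.
move=> hV ni irr sym' huv; have inj := device_morphism_inj ni.
have [a [b [hab href]]] := edge_refined_by_edge huv.
have ua := prefine_pi_edge_endpoint hV inj href.
rewrite [pi_edge u v]pi_edgeC in href; have vb := prefine_pi_edge_endpoint hV inj href.
have neq : phi u != phi v.
  by rewrite (inj_eq inj); apply: contraTneq huv => ->; rewrite irr.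
move: ua vb neq; rewrite !inE.
by case/orP=> /eqP ->; case/orP=> /eqP ->; rewrite ?eqxx // sym'.
Qed.

End DeviceMorphism.

Theorem lemma3 (V V' : finType) (e : rel V) (e' : rel V') :
  simple_graph e -> simple_graph e' ->
  no_isolated e -> no_isolated e' ->
  4 <= minn #|V| #|V'| ->
  contained e e' <-> asd_le (graph_device e) (graph_device e').
Proof.
move=> [_ irr] [sym' _] ni _; rewrite leq_min => /andP[hV _].
split; first exact: contained_asd_le.
move=> [phi [alpha halpha]]; exists phi; split.
  exact: device_morphism_inj halpha ni.
by move=> u v; exact: device_morphism_edge halpha u v hV ni irr sym'.
Qed.
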